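(* Let $k$ be a field and let $G$ be an infinite group. Then for every integer $n \geq 1$ there exists a canonical ring isomorphism $\mathrm{LNUCA}_{c}(G, k^n)\simeq M_n(D^1(k[G]))$.
   Context: Configurations and shift: for a set $A$ and a group $G$, $A^G$ is the set of maps $G\to A$; for $g\in G$, $x\in A^G$ set $(gx)(h)=x(g^{-1}h)$, so $(g^{-1}x)(h)=x(gh)$. For a subset $M\subset G$, a set $S$ of maps $A^M\to A$ and $s\in S^G$, the non-uniform cellular automaton (NUCA) $\sigma_s\colon A^G\to A^G$ is $\sigma_s(x)(g)=s(g)\big((g^{-1}x)\vert_M\big)$; $M$ is its memory. For a vector space $V$ over a field $k$, $\mathrm{LNUCA}_c(G,V)$ denotes the set of maps $\tau\colon V^G\to V^G$ such that $\tau=\sigma_s$ for some finite $M\subset G$ and some $s\in \mathcal{L}(V^M,V)^G$ ($k$-linear maps) for which there is a finite $E\subset G$ with $s(g)=s(h)$ for all $g,h\in G\setminus E$. It is a ring under pointwise addition and composition of maps. For a ring $R$ and group $G$, $R[G]$ is the group ring; $(R[G])[G]$ denotes the set of finitely supported maps $\beta\colon G\to R[G]$, written $g\mapsto\beta(g)$, with $\beta(g)(h)\in R$. The ring $D^1(R[G])$ is the set $R[G]\times (R[G])[G]$ with componentwise addition and multiplication $(\alpha_1,\beta_1)*(\alpha_2,\beta_2)=(\alpha_1\alpha_2,\ \alpha_1\beta_2+\beta_1\alpha_2+\beta_1\beta_2)$, where $\alpha_1\alpha_2$ is the group ring product and, for $\alpha\in R[G]$, $\beta,\gamma\in (R[G])[G]$,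 $g,h\in G$, the twisted products are $(\alpha\beta)(g)(h)=\sum_{t\in G}\alpha(t)\beta(gt)(t^{-1}h)$, $(\beta\alpha)(g)(h)=\sum_{t\in G}\beta(g)(t)\alpha(t^{-1}h)$, $(\beta\gamma)(g)(h)=\sum_{t\in G}\beta(g)(t)\gamma(gt)(t^{-1}h)$. $M_n(\cdot)$ denotes the ring of $n\times n$ matrices. *)

From HB Require Import structures.
From mathcomp Require Import all_boot all_order all_algebra.
From mathcomp Require Import finmap.
From mathcomp Require Import boolp classical_sets cardinality fsbigop.

Set Implicit Arguments.
Unset Strict Implicit.
Unset Printing Implicit Defensive.

Import Order.TTheory GRing.Theory Num.Theory.
Local Open Scope classical_set_scope.
Local Open Scope ring_scope.

Definition is_klinear (k : fieldType) (n : nat) (G : choiceType) (M : {fset G})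
    (f : (M -> 'rV[k]_n) -> 'rV[k]_n) : Prop :=
  forall (a : k) (x y : M -> 'rV[k]_n),
    f (fun m => a *: x m + y m) = a *: f x + f y.

(** The NUCA sigma_s with memory M and local rules s :
    sigma_s(x)(g) = s(g)((g^{-1} x)|_M), where (g^{-1}x)(m) = x(g m). *)
Definition nuca (k : fieldType) (n : nat) (G : groupType) (M : {fset G})
    (s : G -> (M -> 'rV[k]_n) -> 'rV[k]_n) :
    (G -> 'rV[k]_n) -> (G -> 'rV[k]_n) :=
  fun x g => s g (fun m : M => x (g * val m)%g).

Definition LNUCA_c (k : fieldType) (n : nat) (G : groupType)
    (tau : (G -> 'rV[k]_n) -> (G -> 'rV[k]_n)) : Prop :=
  exists (M : {fset G}) (s : G -> (M -> 'rV[k]_n) -> 'rV[k]_n),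
    [/\ forall g, is_klinear (s g),
        exists E : {fset G}, forall g h, g \notin E -> h \notin E -> s g = s h
      & tau = nuca s].

Definition ca_add (k : fieldType) (n : nat) (G : Type)
    (t1 t2 : (G -> 'rV[k]_n) -> (G -> 'rV[k]_n)) :=
  fun x g => t1 x g + t2 x g.

(** An element of k[G] is a finitely supported map G -> k. *)
Definition gr_good (k : fieldType) (G : choiceType) (a : G -> k) : Prop :=
  finite_set [set g | a g != 0].

(** An element of (k[G])[G] is a finitely supported map G -> k[G]. *)
Definition grgr_good (k : fieldType) (G : choiceType) (b : G -> G -> k) : Prop :=
  finite_set [set g | b g <> (fun _ => 0)] /\ forall g, gr_good (b g).

Definition gr_mul (k : fieldType) (G : groupType) (a1 a2 : G -> k) : G -> k :=
  fun h => \sum_(t \in [set: G]) a1 t * a2 (t^-1 * h)%g.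

Definition gr_one (k : fieldType) (G : groupType) : G -> k :=
  fun h => if h == 1%g then 1 else 0.

Definition tw_ab (k : fieldType) (G : groupType) (a : G -> k) (b : G -> G -> k) :
    G -> G -> k :=
  fun g h => \sum_(t \in [set: G]) a t * b (g * t)%g (t^-1 * h)%g.

Definition tw_ba (k : fieldType) (G : groupType) (b : G -> G -> k) (a : G -> k) :
    G -> G -> k :=
  fun g h => \sum_(t \in [set: G]) b g t * a (t^-1 * h)%g.

Definition tw_bb (k : fieldType) (G : groupType) (b c : G -> G -> k) :
    G -> G -> k :=
  fun g h => \sum_(t \in [set: G]) b g t * c (g * t)%g (t^-1 * h)%g.

Definition D1 (k : fieldType) (G : groupType) : Type :=
  ((G -> k) * (G -> G -> k))%type.

Definition D1_good (k : fieldType) (G : groupType) (x : D1 k G) : Prop :=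
  gr_good x.1 /\ grgr_good x.2.

Definition D1_add (k : fieldType) (G : groupType) (x y : D1 k G) : D1 k G :=
  (fun h => x.1 h + y.1 h, fun g h => x.2 g h + y.2 g h).

Definition D1_zero (k : fieldType) (G : groupType) : D1 k G :=
  (fun _ => 0, fun _ _ => 0).

Definition D1_one (k : fieldType) (G : groupType) : D1 k G :=
  (@gr_one k G, fun _ _ => 0).

Definition D1_mul (k : fieldType) (G : groupType) (x y : D1 k G) : D1 k G :=
  (gr_mul x.1 y.1,
   fun g h => tw_ab x.1 y.2 g h + tw_ba x.2 y.1 g h + tw_bb x.2 y.2 g h).

Definition Mx_good (k : fieldType) (G : groupType) (n : nat)
    (A : 'M[D1 k G]_n) : Prop :=
  forall i j, D1_good (A i j).

Definition Mx_add (k : fieldType) (G : groupType) (n : nat)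
    (A B : 'M[D1 k G]_n) : 'M[D1 k G]_n :=
  \matrix_(i, j) D1_add (A i j) (B i j).

Definition Mx_mul (k : fieldType) (G : groupType) (n : nat)
    (A B : 'M[D1 k G]_n) : 'M[D1 k G]_n :=
  \matrix_(i, j) \big[@D1_add k G/@D1_zero k G]_(l < n) D1_mul (A i l) (B l j).

Definition Mx_one (k : fieldType) (G : groupType) (n : nat) : 'M[D1 k G]_n :=
  \matrix_(i, j) if i == j then @D1_one k G else @D1_zero k G.

From mathcomp Require Import all_boot all_algebra.
From mathcomp Require Import finmap.
From mathcomp Require Import boolp classical_sets cardinality fsbigop.
From mathcomp Require Import ring.

(** A linear NUCA is given cell by cell by coefficient matrices c(g, h) in
    M_n(k), the weight of cell g h in the new state of cell g; they vanish for
    h outside the memory and do not depend on g outside a finite set E.  Since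
    G is infinite there is a cell g0 outside E, and c splits as
    alpha(h) = c(g0, h) plus the finitely supported correction
    beta(g)(h) = c(g, h) - alpha(h); alpha is recovered from c at any cell
    outside E, so the splitting is unique.  Composing two automata convolves
    their coefficients, c12(g, h) = sum_t c1(g, t) c2(g t, t^-1 h), and
    expanding c = alpha + beta in this formula gives exactly the product of
    D^1(k[G]).  Hence A |-> sigma_A is a bijection from M_n(D^1(k[G])) onto
    LNUCA_c(G, k^n) respecting sums, products and units, and its inverse is
    the required isomorphism. *)

Set Implicit Arguments.
Unset Strict Implicit.
Unset Printing Implicit Defensive.

Import GRing.Theory.
Local Open Scope classical_set_scope.
Local Open Scope ring_scope.

Lemma finite_set_fsetP (T : choiceType) (A : set T) :
  finite_set A <-> exists S : {fset T}, forall x, x \notin S -> ~ A x.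
Proof.
split=> [/finite_fsetP[S ->]|[S AS]]; first by exists S => x /negP.
by apply: sub_finite_set (finite_fset S) => x Ax; apply: contrapT => /negP /AS.
Qed.

Lemma infinite_setT_notin (T : choiceType) (E : {fset T}) :
  infinite_set [set: T] -> exists x, x \notin E.
Proof.
move=> Tinf; apply: contrapT => noE; apply/Tinf/finite_set_fsetP.
by exists E => x xE _; apply: noE; exists x.
Qed.

Lemma fsbigT_mul_eq0 (R : pzSemiRingType) (T : choiceType) (S : {fset T})
    (X Y : T -> R) :
  (forall t, t \notin S -> X t = 0) -> (forall t, t \in S -> Y t = 0) ->
  \sum_(t \in [set: T]) X t * Y t = 0.
Proof.
move=> X0 Y0; apply: fsbig1 => t _.
by have [/Y0 ->|/X0 ->] := boolP (t \in S); rewrite ?mulr0 ?mul0r.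
Qed.

Section FsetMul.
Variable G : groupType.

Definition fset_mul (A B : {fset G}) : {fset G} :=
  [fset (x * y)%g | x in A, y in B]%fset.

Definition fset_inv (A : {fset G}) : {fset G} := [fset x^-1%g | x in A]%fset.

Lemma mem_fset_mul (A B : {fset G}) x y :
  x \in A -> y \in B -> (x * y)%g \in fset_mul A B.
Proof. by move=> xA yB; apply/imfset2P; exists x => //; exists y. Qed.

Lemma notin_fset_mul_translate (A B : {fset G}) t h :
  t \in A -> h \notin fset_mul A B -> (t^-1 * h)%g \notin B.
Proof. by move=> tA; apply: contra => /(mem_fset_mul tA); rewrite mulVKg. Qed.

Lemma notin_fset_mul_inv (A B : {fset G}) t g :
  t \in A -> g \notin fset_mul B (fset_inv A) -> (g * t)%g \notin B.
Proof.
move=> tA; have tAV : (t^-1)%g \in fset_inv A by apply/imfsetP; exists t.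
by apply: contra => /mem_fset_mul /(_ tAV); rewrite mulgK.
Qed.

Lemma big_fset_mul_translate (R : nmodType) (A B : {fset G}) t (F : G -> R) :
  t \in A -> (forall h, h \notin B -> F h = 0) ->
  \sum_(h <- B) F h = \sum_(h <- fset_mul A B) F (t^-1 * h)%g.
Proof.
move=> tA F0; rewrite -(fsbigTE B F) // -fsbigTE; last first.
  by move=> h /(notin_fset_mul_translate tA) /F0.
apply: reindex_fsbigT; exists (fun h => t * h)%g => h; first exact: mulVKg.
exact: mulKg.
Qed.

End FsetMul.

Section Support.
Variables (k : fieldType) (G : groupType).
Implicit Types (x y : D1 k G) (S E : {fset G}).

Record D1_supported x S E : Prop := D1Supported {
  D1_supp_fst : forall h, h \notin S -> x.1 h = 0;
  D1_supp_snd : forall g h, h \notin S -> x.2 g h = 0;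
  D1_supp_gen : forall g h, g \notin E -> x.2 g h = 0 }.

Lemma D1_supportedS x S S' E E' : (S `<=` S')%fset -> (E `<=` E')%fset ->
  D1_supported x S E -> D1_supported x S' E'.
Proof.
move=> /fsubsetP sS /fsubsetP sE [x1 x2 xE].
by split=> [h|g h|g h]; [move/(contra (sS h))/x1|move/(contra (sS h))/x2|
  move/(contra (sE g))/xE].
Qed.

Lemma D1_good_supported x : D1_good x -> exists S E, D1_supported x S E.
Proof.
move=> [/finite_set_fsetP[Sa xa] [/finite_set_fsetP[E xb] xbg]].
have /choice[Sb xbS] : forall g, exists S : {fset G},
    forall h, h \notin S -> ~ [set h | x.2 g h != 0] h.
  by move=> g; apply/finite_set_fsetP/xbg.
exists (Sa `|` \bigcup_(g <- E) Sb g)%fset, E.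
have xE g : g \notin E -> x.2 g = (fun=> 0) by move/xb; apply: contrapT.
split=> [h|g h|g h].
- by rewrite inE negb_or => /andP[/xa /negP/negbNE/eqP].
- rewrite inE negb_or => /andP[_ hS]; have [gE|/xE -> //] := boolP (g \in E).
  apply/eqP/negbNE/negP/xbS; apply: contra hS.
  exact/fsubsetP/(bigfcup_sup _ gE).
- by move/xE ->.
Qed.

Lemma supported_D1_good x S E : D1_supported x S E -> D1_good x.
Proof.
move=> [x1 x2 xE]; split; last split.
- by apply/finite_set_fsetP; exists S => h /x1 /= ->; rewrite eqxx.
- by apply/finite_set_fsetP; exists E => g /xE x0; apply; apply: funext.
- by move=> g; apply/finite_set_fsetP; exists S => h /(x2 g) /= ->; rewrite eqxx.
Qed.

Lemma D1_supported0 S E : D1_supported (@D1_zero k G) S E.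
Proof. by []. Qed.

Lemma D1_supported1 : D1_supported (@D1_one k G) [fset 1%g]%fset fset0.
Proof. by split=> // h; rewrite inE /D1_one /gr_one /= => /negbTE ->. Qed.

Lemma D1_supported_add x y S E : D1_supported x S E -> D1_supported y S E ->
  D1_supported (D1_add x y) S E.
Proof.
move=> [x1 x2 xE] [y1 y2 yE].
split=> [h|g h|g h] hS /=.
- by rewrite x1 ?y1 ?addr0.
- by rewrite x2 ?y2 ?addr0.
- by rewrite xE ?yE ?addr0.
Qed.

Lemma D1_supported_mul x y SA EA SB EB :
  D1_supported x SA EA -> D1_supported y SB EB ->
  D1_supported (D1_mul x y) (fset_mul SA SB)
    (EA `|` fset_mul EB (fset_inv SA))%fset.
Proof.
move=> [x1 x2 xE] [y1 y2 yE].
split=> [h|g h|g h] /=.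
- move=> hS; rewrite /gr_mul; apply: (@fsbigT_mul_eq0 k _ SA) => t tS.
    exact: x1.
  exact/y1/(notin_fset_mul_translate tS).
- move=> hS; rewrite /tw_ab /tw_ba /tw_bb.
  by rewrite !(@fsbigT_mul_eq0 k _ SA) ?addr0 // => t tS;
    rewrite ?x1 ?x2 ?y1 ?y2 // (notin_fset_mul_translate tS).
rewrite inE negb_or => /andP[gEA gE]; rewrite /tw_ab /tw_ba /tw_bb.
rewrite (@fsbigT_mul_eq0 k _ SA) => [|t|t tS]; last 2 first.
- exact: x1.
- exact/yE/(notin_fset_mul_inv tS).
by rewrite add0r !fsbig1 ?addr0 // => t _; rewrite xE ?mul0r.
Qed.

End Support.

Section D1Sum.
Variables (k : fieldType) (G : groupType) (I : Type) (r : seq I) (P : pred I).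
Variable F : I -> D1 k G.

Lemma D1_sum_fst h :
  (\big[@D1_add k G/@D1_zero k G]_(l <- r | P l) F l).1 h =
  \sum_(l <- r | P l) (F l).1 h.
Proof. by elim/big_rec2: _ => // l y x _ <-. Qed.

Lemma D1_sum_snd g h :
  (\big[@D1_add k G/@D1_zero k G]_(l <- r | P l) F l).2 g h =
  \sum_(l <- r | P l) (F l).2 g h.
Proof. by elim/big_rec2: _ => // l y x _ <-. Qed.

Lemma D1_supported_sum S E : (forall l, P l -> D1_supported (F l) S E) ->
  D1_supported (\big[@D1_add k G/@D1_zero k G]_(l <- r | P l) F l) S E.
Proof.
move=> FS; apply: (big_ind (fun x => D1_supported x S E)) => //.
by move=> x y; exact: D1_supported_add.
Qed.

End D1Sum.

Section MatrixSupport.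
Variables (k : fieldType) (G : groupType) (n : nat).
Implicit Types (A B : 'M[D1 k G]_n) (S E : {fset G}).

Definition mx_supported A S E := forall i j, D1_supported (A i j) S E.

Lemma Mx_goodP A : Mx_good A <-> exists S E, mx_supported A S E.
Proof.
split=> [gA|[S [E AS]] i j]; last exact: supported_D1_good (AS i j).
have /fin_all_exists[SE ASE] : forall p : 'I_n * 'I_n,
    exists SE : {fset G} * {fset G}, D1_supported (A p.1 p.2) SE.1 SE.2.
  by move=> [i j]; have [S [E AS]] := D1_good_supported (gA i j); exists (S, E).
exists (\bigcup_(p <- index_enum ('I_n * 'I_n)%type) (SE p).1)%fset.
exists (\bigcup_(p <- index_enum ('I_n * 'I_n)%type) (SE p).2)%fset => i j.
by apply: D1_supportedS (ASE (i, j)); apply: bigfcup_sup; rewrite ?mem_index_enum.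
Qed.

Lemma mx_supportedS A S S' E E' : (S `<=` S')%fset -> (E `<=` E')%fset ->
  mx_supported A S E -> mx_supported A S' E'.
Proof. by move=> sS sE AS i j; apply: D1_supportedS (AS i j). Qed.

Lemma mx_supported_add A B SA EA SB EB :
  mx_supported A SA EA -> mx_supported B SB EB ->
  mx_supported (Mx_add A B) (SA `|` SB)%fset (EA `|` EB)%fset.
Proof.
move=> /(mx_supportedS (fsubsetUl SA SB) (fsubsetUl EA EB)) AS.
move=> /(mx_supportedS (fsubsetUr SA SB) (fsubsetUr EA EB)) BS i j.
by rewrite mxE; apply: D1_supported_add.
Qed.

Lemma mx_supported_mul A B SA EA SB EB :
  mx_supported A SA EA -> mx_supported B SB EB ->
  mx_supported (Mx_mul A B) (fset_mul SA SB)
    (EA `|` fset_mul EB (fset_inv SA))%fset.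
Proof.
by move=> AS BS i j; rewrite mxE; apply: D1_supported_sum => l _;
  apply: D1_supported_mul.
Qed.

Lemma mx_supported1 : mx_supported (@Mx_one k G n) [fset 1%g]%fset fset0.
Proof.
move=> i j; rewrite mxE.
by case: eqP => _; [exact: D1_supported1|exact: D1_supported0].
Qed.

End MatrixSupport.

Section KLinear.
Variables (k : fieldType) (n : nat) (T : choiceType) (M : {fset T}).
Variable f : (M -> 'rV[k]_n) -> 'rV[k]_n.
Hypothesis flin : is_klinear f.

Lemma klinear0 : f (fun=> 0) = 0.
Proof.
have := flin 1 (fun=> 0) (fun=> 0); rewrite scaler0 addr0 scale1r => f0.
by apply: (@addrI _ (f (fun=> 0))); rewrite addr0 -f0.
Qed.

Lemma klinear_sum (I : Type) (r : seq I) (a : I -> k) (F : I -> M -> 'rV[k]_n) :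
  f (fun m => \sum_(i <- r) a i *: F i m) = \sum_(i <- r) a i *: f (F i).
Proof.
elim: r => [|i r IHr].
  rewrite big_nil -[X in _ = X]klinear0; congr f.
  by apply: funext => m; rewrite big_nil.
rewrite big_cons -IHr -flin; congr f; apply: funext => m; exact: big_cons.
Qed.

Definition cfg_unit (m : M) (j : 'I_n) : M -> 'rV[k]_n :=
  fun m' => if m' == m then 'e_j else 0.

Definition klinear_mx (m : M) : 'M[k]_n := \matrix_j f (cfg_unit m j).

Lemma klinear_mxE y : f y = \sum_(m : M) y m *m klinear_mx m.
Proof.
have y_sum : y = fun m' => \sum_(p : M * 'I_n) y p.1 0 p.2 *: cfg_unit p.1 p.2 m'.
  apply: funext => m'.
  rewrite -(pair_bigA _ (fun m j => y m 0 j *: cfg_unit m j m')) /=.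
  rewrite (bigD1 m') //= [X in _ + X]big1 ?addr0.
    by rewrite /cfg_unit eqxx -row_sum_delta.
  move=> m /negbTE mm'; apply: big1 => j _.
  by rewrite /cfg_unit eq_sym mm' scaler0.
under eq_bigr => m _ do rewrite mulmx_sum_row.
rewrite {1}y_sum klinear_sum pair_bigA /=.
by apply: eq_bigr => -[m j] _; rewrite rowK.
Qed.

End KLinear.

Section Automaton.
Variables (k : fieldType) (G : groupType) (n : nat).
Implicit Types (A B : 'M[D1 k G]_n) (S E : {fset G}) (x : G -> 'rV[k]_n).

(* The transpose of the paper's coefficient matrix alpha(h) + beta(g)(h):
   states are row vectors, so they are acted on from the right. *)
Definition coef_mx A (g h : G) : 'M[k]_n :=
  \matrix_(j, i) ((A i j).1 h + (A i j).2 g h).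

Definition ca_of_mx A x g : 'rV[k]_n :=
  \sum_(h \in [set: G]) x (g * h)%g *m coef_mx A g h.

Lemma coef_mx_eq0 A S E g h :
  mx_supported A S E -> h \notin S -> coef_mx A g h = 0.
Proof.
move=> AS hS; apply/matrixP => j i.
by rewrite !mxE (D1_supp_fst (AS i j)) ?(D1_supp_snd (AS i j)) ?addr0.
Qed.

Lemma coef_mx_gen A S E g h : mx_supported A S E -> g \notin E ->
  coef_mx A g h = \matrix_(j, i) (A i j).1 h.
Proof.
by move=> AS gE; apply/matrixP => j i; rewrite !mxE (D1_supp_gen (AS i j)) ?addr0.
Qed.

Lemma ca_of_mx_fsetE A S E x g : mx_supported A S E ->
  ca_of_mx A x g = \sum_(h <- S) x (g * h)%g *m coef_mx A g h.
Proof.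
by move=> AS; apply: fsbigTE => h /(coef_mx_eq0 g AS) ->; rewrite mulmx0.
Qed.

Definition cfg1 (y : G) (v : 'rV[k]_n) : G -> 'rV[k]_n :=
  fun z => if z == y then v else 0.

Lemma ca_of_mx_cfg1 A g h v : ca_of_mx A (cfg1 (g * h) v) g = v *m coef_mx A g h.
Proof.
rewrite /ca_of_mx (fsbigTE [fset h]%fset) ?big_seq_fset1 /cfg1 ?eqxx // => h'.
by rewrite inE (inj_eq (mulgI g)) => /negbTE ->; rewrite mul0mx.
Qed.

Lemma coef_mx_ca A B g h :
  ca_of_mx A = ca_of_mx B -> coef_mx A g h = coef_mx B g h.
Proof.
by move=> eAB; apply/row_matrixP => j; rewrite !rowE -!ca_of_mx_cfg1 eAB.
Qed.

Lemma coef_mx_add A B g h :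
  coef_mx (Mx_add A B) g h = coef_mx A g h + coef_mx B g h.
Proof. by apply/matrixP => j i; rewrite !mxE /= addrACA. Qed.

Lemma coef_mx_one g : coef_mx (@Mx_one k G n) g 1%g = 1%:M.
Proof.
apply/matrixP => j i; rewrite !mxE eq_sym.
by case: (j == i); rewrite /= ?/gr_one ?eqxx addr0.
Qed.

Lemma coef_mx_mul A B SA EA g h : mx_supported A SA EA ->
  coef_mx (Mx_mul A B) g h =
  \sum_(t <- SA) coef_mx B (g * t)%g (t^-1 * h)%g *m coef_mx A g t.
Proof.
move=> AS; apply/matrixP => j i; rewrite summxE !mxE D1_sum_fst D1_sum_snd.
rewrite -big_split /=; under [RHS]eq_bigr => t _ do rewrite !mxE.
rewrite exchange_big /=; apply: eq_bigr => l _.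
rewrite /gr_mul /tw_ab /tw_ba /tw_bb !(fsbigTE SA) => [|t tS|t tS|t tS|t tS];
  rewrite ?(D1_supp_fst (AS i l)) ?(D1_supp_snd (AS i l)) ?mul0r //.
by rewrite -!big_split /=; apply: eq_bigr => t _; rewrite !mxE; ring.
Qed.

End Automaton.

Section Isomorphism.
Variables (k : fieldType) (G : groupType) (n : nat).
Implicit Types (A B : 'M[D1 k G]_n) (S E : {fset G}).

Lemma Mx_good_add A B : Mx_good A -> Mx_good B -> Mx_good (Mx_add A B).
Proof.
move=> /Mx_goodP[SA [EA AS]] /Mx_goodP[SB [EB BS]].
by apply/Mx_goodP; do 2 eexists; exact: mx_supported_add AS BS.
Qed.

Lemma Mx_good_mul A B : Mx_good A -> Mx_good B -> Mx_good (Mx_mul A B).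
Proof.
move=> /Mx_goodP[SA [EA AS]] /Mx_goodP[SB [EB BS]].
by apply/Mx_goodP; do 2 eexists; exact: mx_supported_mul AS BS.
Qed.

Lemma Mx_good_one : Mx_good (@Mx_one k G n).
Proof. by apply/Mx_goodP; do 2 eexists; exact: mx_supported1. Qed.

Lemma ca_of_mx_add A B : Mx_good A -> Mx_good B ->
  ca_of_mx (Mx_add A B) = ca_add (ca_of_mx A) (ca_of_mx B).
Proof.
move=> /Mx_goodP[SA [EA AS]] /Mx_goodP[SB [EB BS]].
have ABS := mx_supported_add AS BS.
have {}AS := mx_supportedS (fsubsetUl SA SB) (fsubset_refl EA) AS.
have {}BS := mx_supportedS (fsubsetUr SA SB) (fsubset_refl EB) BS.
apply: funext => x; apply: funext => g; rewrite /ca_add.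
rewrite (ca_of_mx_fsetE _ _ ABS) (ca_of_mx_fsetE _ _ AS) (ca_of_mx_fsetE _ _ BS).
by rewrite -big_split; apply: eq_bigr => h _; rewrite coef_mx_add mulmxDr.
Qed.

Lemma ca_of_mx_one : ca_of_mx (@Mx_one k G n) = id.
Proof.
apply: funext => x; apply: funext => g.
rewrite (ca_of_mx_fsetE _ _ (@mx_supported1 k G n)) big_seq_fset1 mulg1.
by rewrite coef_mx_one mulmx1.
Qed.

Lemma ca_of_mx_mul A B : Mx_good A -> Mx_good B ->
  ca_of_mx (Mx_mul A B) = ca_of_mx A \o ca_of_mx B.
Proof.
move=> /Mx_goodP[SA [EA AS]] /Mx_goodP[SB [EB BS]].
apply: funext => x; apply: funext => g /=.
rewrite (ca_of_mx_fsetE _ _ (mx_supported_mul AS BS)) (ca_of_mx_fsetE _ _ AS).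
under eq_bigr => h _ do rewrite (coef_mx_mul _ _ _ AS) mulmx_sumr.
rewrite exchange_big /=; apply: eq_big_seq => t tS.
rewrite (ca_of_mx_fsetE _ _ BS) mulmx_suml [RHS](big_fset_mul_translate tS).
  by apply: eq_bigr => h _; rewrite mulmxA -mulgA mulVKg.
by move=> s sB; rewrite (coef_mx_eq0 _ BS) // mulmx0 mul0mx.
Qed.

Lemma ca_of_mx_LNUCA A : Mx_good A -> LNUCA_c (ca_of_mx A).
Proof.
move=> /Mx_goodP[S [E AS]].
exists S, (fun g y => \sum_(m : S) y m *m coef_mx A g (val m)); split.
- move=> g a y z; rewrite scaler_sumr -big_split; apply: eq_bigr => m _ /=.
  by rewrite mulmxDl scalemxAl.
- exists E => g h gE hE; apply: funext => y; apply: eq_bigr => m _.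
  by rewrite !(coef_mx_gen _ AS).
apply: funext => x; apply: funext => g.
by rewrite /nuca (ca_of_mx_fsetE _ _ AS) big_seq_fsetE.
Qed.

Hypothesis Ginf : infinite_set [set: G].

Lemma ca_of_mx_inj A B : Mx_good A -> Mx_good B ->
  ca_of_mx A = ca_of_mx B -> A = B.
Proof.
move=> /Mx_goodP[SA [EA AS]] /Mx_goodP[SB [EB BS]] eAB.
have [g0] := infinite_setT_notin (EA `|` EB)%fset Ginf.
rewrite inE negb_or => /andP[g0A g0B].
have e1 i j h : (A i j).1 h = (B i j).1 h.
  have /matrixP/(_ j i) := coef_mx_ca g0 h eAB.
  by rewrite (coef_mx_gen _ AS) // (coef_mx_gen _ BS) // !mxE.
apply/matrixP => i j; rewrite [A i j]surjective_pairing [B i j]surjective_pairing.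
congr pair; first by apply: funext => h; exact: e1.
apply: funext => g; apply: funext => h.
have /matrixP/(_ j i) := coef_mx_ca g h eAB.
by rewrite !mxE e1 => /addrI.
Qed.

Lemma LNUCA_ca_of_mx (tau : (G -> 'rV[k]_n) -> G -> 'rV[k]_n) :
  LNUCA_c tau -> exists2 A, Mx_good A & tau = ca_of_mx A.
Proof.
move=> [M [s [slin [E sE] ->]]].
have [g0 g0E] := infinite_setT_notin E Ginf.
pose c g h : 'M[k]_n :=
  if (insub h : option M) is Some m then klinear_mx (s g) m else 0.
pose A : 'M[D1 k G]_n :=
  \matrix_(i, j) (fun h => c g0 h j i, fun g h => c g h j i - c g0 h j i).
have cA g h : coef_mx A g h = c g h.
  by apply/matrixP => j i; rewrite !mxE /= addrC subrK.
have AS : mx_supported A M E.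
  move=> i j; rewrite mxE; split=> [h|g h|g h] /=.
  - by move=> hM; rewrite /c insubN // mxE.
  - by move=> hM; rewrite /c insubN // !mxE subrr.
  - by move=> gE; rewrite /c (sE g g0) // subrr.
exists A; first by apply/Mx_goodP; exists M, E.
apply: funext => x; apply: funext => g.
rewrite /nuca klinear_mxE // (ca_of_mx_fsetE _ _ AS) big_seq_fsetE.
by apply: eq_bigr => m _; rewrite cA /c valK.
Qed.

Lemma LNUCA_cP (tau : (G -> 'rV[k]_n) -> G -> 'rV[k]_n) :
  LNUCA_c tau <-> exists2 A, Mx_good A & tau = ca_of_mx A.
Proof.
by split=> [/LNUCA_ca_of_mx|[A gA ->]] //; exact: ca_of_mx_LNUCA.
Qed.

Definition mx_of_ca (tau : (G -> 'rV[k]_n) -> G -> 'rV[k]_n) : 'M[D1 k G]_n :=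
  if pselect (exists2 A, Mx_good A & ca_of_mx A = tau) is left ex
  then s2val (cid2 ex) else @Mx_one k G n.

Lemma ca_of_mxK A : Mx_good A -> mx_of_ca (ca_of_mx A) = A.
Proof.
move=> gA; rewrite /mx_of_ca; case: pselect => [ex|]; last by case; exists A.
by case: (cid2 ex) => B gB eBA /=; exact: ca_of_mx_inj eBA.
Qed.

End Isomorphism.

Theorem theoremA (k : fieldType) (G : groupType)
    (Ginf : infinite_set [set: G]) (n : nat) (hn : (1 <= n)%N) :
  exists phi : ((G -> 'rV[k]_n) -> (G -> 'rV[k]_n)) -> 'M[D1 k G]_n,
    (forall tau, LNUCA_c tau -> Mx_good (phi tau)) /\
    (forall t1 t2, LNUCA_c t1 -> LNUCA_c t2 -> phi t1 = phi t2 -> t1 = t2) /\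
    (forall A, Mx_good A -> exists2 tau, LNUCA_c tau & phi tau = A) /\
    (forall t1 t2, LNUCA_c t1 -> LNUCA_c t2 ->
       phi (ca_add t1 t2) = Mx_add (phi t1) (phi t2)) /\
    (forall t1 t2, LNUCA_c t1 -> LNUCA_c t2 ->
       phi (t1 \o t2) = Mx_mul (phi t1) (phi t2)) /\
    phi id = @Mx_one k G n.
Proof.
have caK := ca_of_mxK Ginf; have caP := LNUCA_cP Ginf.
exists (@mx_of_ca k G n); split; [|split; [|split; [|split; [|split]]]].
- by move=> _ /caP[A gA ->]; rewrite caK.
- by move=> _ _ /caP[A gA ->] /caP[B gB ->]; rewrite !caK // => ->.
- by move=> A gA; exists (ca_of_mx A); [apply/caP; exists A | rewrite caK].
- move=> _ _ /caP[A gA ->] /caP[B gB ->].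
  by rewrite -ca_of_mx_add // !caK //; apply: Mx_good_add.
- move=> _ _ /caP[A gA ->] /caP[B gB ->].
  by rewrite -ca_of_mx_mul // !caK //; apply: Mx_good_mul.
by rewrite -ca_of_mx_one caK //; exact: Mx_good_one.
Qed.
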